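(* Let $x_s<x_t$ be integers, let $C\ge 0$, and let $f:[x_s,x_t]\to\mathbb{R}$ be such that $([x_s,x_t],f)$ is an Ameso($C$) pair. If there exist $x',z_s,z_t\in[x_s,x_t]$ with $z_s<x'<z_t$, $f(z_s)-f(x')\ge C$ and $f(z_t)-f(x')\ge C$, then $\min_{y\in[z_s,z_t]}f(y)=\min_{y\in[x_s,x_t]}f(y)$.
   Context: For integers $a\le b$, $[a,b]$ denotes the set of integers $\{a,\dots,b\}$. Floors and ceilings of vectors are taken componentwise. A set $D^n\subseteq\mathbb{Z}^n$ is an Ameso set if $\lceil(\vec x+\vec y)/2\rceil,\lfloor(\vec x+\vec y)/2\rfloor\in D^n$ for all $\vec x,\vec y\in D^n$. For $C\ge 0$, $(D^n,f)$ is an Ameso($C$) pair if $D^n$ is an Ameso set, $f:D^n\to\mathbb{R}$ is bounded below, and $f(\vec x)+f(\vec y)+C\ge f(\lceil(\vec x+\vec y)/2\rceil)+f(\lfloor(\vec x+\vec y)/2\rfloor)$ for all $\vec x,\vec y\in D^n$. *)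

From Stdlib Require Import Reals ZArith Lia Lra.
Open Scope R_scope.

Definition in_Zint (a b x : Z) : Prop := (a <= x <= b)%Z.

(* Componentwise (n = 1) floor and ceiling of (x+y)/2. *)
Definition mid_floor (x y : Z) : Z := Z.div (x + y) 2.
Definition mid_ceil (x y : Z) : Z := (- Z.div (- (x + y)) 2)%Z.

Definition Ameso_set (D : Z -> Prop) : Prop :=
  forall x y, D x -> D y -> D (mid_ceil x y) /\ D (mid_floor x y).

(* (D, f) is an Ameso(C) pair; f is only relevant on D. *)
Definition Ameso_pair (C : R) (D : Z -> Prop) (f : Z -> R) : Prop :=
  Ameso_set D /\
  (exists m : R, forall x, D x -> m <= f x) /\
  (forall x y, D x -> D y ->
     f x + f y + C >= f (mid_ceil x y) + f (mid_floor x y)).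

Definition is_min_on (a b : Z) (f : Z -> R) (m : R) : Prop :=
  (exists y, in_Zint a b y /\ f y = m) /\
  (forall y, in_Zint a b y -> m <= f y).

(* Taking y := 2c - x in the Ameso inequality gives the approximate midpoint
   convexity 2 f(c) <= f(c - d) + f(c + d) + C.  Suppose u < z < w and
   f(z) >= f(u) + C, and let m be the last maximiser of f on [u, w - 1];
   then u < m.  If m is in the right half of [u, w], reflecting w through m
   lands in [u, m] and gives f(w) >= f(m) - C >= f(z) - C >= f(u); otherwise
   reflecting u through m lands in (m, w - 1], where f < f(m), which forces
   f(m) < f(u) + C <= f(z), a contradiction.  So f never returns below f(x')
   beyond zt, and symmetrically before zs: the minimum over [xs, xt] is
   attained in [zs, zt]. *)
From Stdlib Require Import Reals ZArith Lia Lra.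
Open Scope R_scope.

Definition approx_midconvex_on (C : R) (a b : Z) (f : Z -> R) : Prop :=
  forall p c, in_Zint a b p -> in_Zint a b (2 * c - p) ->
    2 * f c <= f p + f (2 * c - p)%Z + C.

Lemma mid_floor_mirror (p c : Z) : mid_floor p (2 * c - p) = c.
Proof.
  unfold mid_floor. replace (p + (2 * c - p))%Z with (c * 2)%Z by lia.
  apply Z.div_mul; lia.
Qed.

Lemma mid_ceil_mirror (p c : Z) : mid_ceil p (2 * c - p) = c.
Proof.
  unfold mid_ceil. replace (- (p + (2 * c - p)))%Z with (- c * 2)%Z by lia.
  rewrite Z.div_mul; lia.
Qed.

Lemma Ameso_pair_approx_midconvex (C : R) (a b : Z) (f : Z -> R) :
  Ameso_pair C (in_Zint a b) f -> approx_midconvex_on C a b f.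
Proof.
  intros [_ [_ Hineq]] p c Hp Hq.
  pose proof (Hineq p (2 * c - p)%Z Hp Hq) as H.
  rewrite mid_floor_mirror, mid_ceil_mirror in H. lra.
Qed.

Lemma approx_midconvex_reflect (C : R) (a b : Z) (f : Z -> R) :
  approx_midconvex_on C a b f ->
  approx_midconvex_on C (- b) (- a) (fun t => f (- t)%Z).
Proof.
  unfold approx_midconvex_on, in_Zint. intros Hf p c Hp Hq.
  replace (- (2 * c - p))%Z with (2 * - c - - p)%Z by lia.
  apply Hf; lia.
Qed.

Lemma exists_last_argmax (f : Z -> R) (u v : Z) : (u <= v)%Z ->
  exists m, (u <= m <= v)%Z /\
    (forall t, (u <= t <= v)%Z -> f t <= f m) /\
    (forall t, (m < t <= v)%Z -> f t < f m).
Proof.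
  intros Huv. replace v with (u + (v - u))%Z by lia.
  assert (Hk : (0 <= v - u)%Z) by lia. revert Hk. generalize (v - u)%Z as k.
  apply natlike_ind.
  - exists u. split; [lia | split]; intros t Ht; [| lia].
    replace t with u by lia. lra.
  - intros k Hk [m [Hm [Hmax Hlast]]].
    set (n := (u + Z.succ k)%Z).
    destruct (Rle_lt_dec (f m) (f n)) as [Hle | Hlt].
    + exists n. split; [unfold n; lia | split].
      * intros t Ht. destruct (Z.eq_dec t n) as [-> | Hne]; [lra |].
        assert (f t <= f m) by (apply Hmax; unfold n in *; lia). lra.
      * intros t Ht. lia.
    + exists m. split; [unfold n in *; lia | split].
      * intros t Ht. destruct (Z.eq_dec t n) as [-> | Hne]; [lra |].
        apply Hmax; unfold n in *; lia.
      * intros t Ht. destruct (Z.eq_dec t n) as [-> | Hne]; [lra |].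
        apply Hlast; unfold n in *; lia.
Qed.

Lemma approx_midconvex_rise_persists (C : R) (a b : Z) (f : Z -> R) :
  approx_midconvex_on C a b f -> 0 <= C ->
  forall u z w, (a <= u < z)%Z -> (z < w <= b)%Z ->
    f u + C <= f z -> f u <= f w.
Proof.
  intros Hf HC u z w Hu Hw Hrise.
  destruct (exists_last_argmax f u (w - 1)) as [m [Hm [Hmax Hlast]]]; [lia |].
  assert (Hzm : f z <= f m) by (apply Hmax; lia).
  assert (Hum : (u < m)%Z).
  { destruct (Z.eq_dec m u) as [-> | Hne]; [| lia].
    assert (f z < f u) by (apply Hlast; lia). lra. }
  destruct (Z_le_gt_dec (u + w) (2 * m)) as [Hright | Hleft].
  - assert (Hp : f (2 * m - w)%Z <= f m) by (apply Hmax; lia).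
    assert (2 * f m <= f (2 * m - w)%Z + f w + C).
    { replace (f w) with (f (2 * m - (2 * m - w))%Z) by (f_equal; lia).
      apply Hf; unfold in_Zint; lia. }
    lra.
  - assert (Hq : f (2 * m - u)%Z < f m) by (apply Hlast; lia).
    assert (2 * f m <= f u + f (2 * m - u)%Z + C) by (apply Hf; unfold in_Zint; lia).
    lra.
Qed.

Lemma approx_midconvex_rise_persists_left (C : R) (a b : Z) (f : Z -> R) :
  approx_midconvex_on C a b f -> 0 <= C ->
  forall u z w, (z < u <= b)%Z -> (a <= w < z)%Z ->
    f u + C <= f z -> f u <= f w.
Proof.
  intros Hf HC u z w Hu Hw Hrise.
  pose proof (approx_midconvex_rise_persists C (- b) (- a) (fun t => f (- t)%Z)
    (approx_midconvex_reflect C a b f Hf) HC (- u) (- z) (- w)) as H.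
  simpl in H. rewrite !Z.opp_involutive in H. apply H; lia || lra.
Qed.

Lemma approx_midconvex_ge_outside (C : R) (a b : Z) (f : Z -> R) :
  approx_midconvex_on C a b f -> 0 <= C ->
  forall x' zs zt, (a <= zs < x')%Z -> (x' < zt <= b)%Z ->
    f x' + C <= f zs -> f x' + C <= f zt ->
    forall y, in_Zint a b y -> (y < zs \/ zt < y)%Z -> f x' <= f y.
Proof.
  unfold in_Zint. intros Hf HC x' zs zt Hzs Hzt Hs Ht y Hy [Hleft | Hright].
  - apply (approx_midconvex_rise_persists_left C a b f Hf HC x' zs); lia || lra.
  - apply (approx_midconvex_rise_persists C a b f Hf HC x' zt); lia || lra.
Qed.

Theorem corollary4 (xs xt : Z) (C : R) (f : Z -> R) :
  (xs < xt)%Z -> 0 <= C ->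
  Ameso_pair C (in_Zint xs xt) f ->
  forall x' zs zt : Z,
    in_Zint xs xt x' -> in_Zint xs xt zs -> in_Zint xs xt zt ->
    (zs < x')%Z -> (x' < zt)%Z ->
    f zs - f x' >= C -> f zt - f x' >= C ->
    forall m1 m2 : R,
      is_min_on zs zt f m1 -> is_min_on xs xt f m2 -> m1 = m2.
Proof.
  intros _ HC Hpair x' zs zt Hx' Hzs Hzt Hsx Hxt Hs Ht m1 m2
    [[y1 [Hy1 <-]] Hmin1] [[y2 [Hy2 <-]] Hmin2].
  unfold in_Zint in *.
  assert (Hf : approx_midconvex_on C xs xt f)
    by (apply Ameso_pair_approx_midconvex; exact Hpair).
  assert (f y2 <= f y1) by (apply Hmin2; lia).
  assert (f y1 <= f y2).
  { assert (Hcase : (zs <= y2 <= zt \/ (y2 < zs \/ zt < y2))%Z) by lia.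
    destruct Hcase as [Hin | Hout]; [apply Hmin1; lia |].
    assert (f x' <= f y2)
      by (apply (approx_midconvex_ge_outside C xs xt f Hf HC x' zs zt);
          unfold in_Zint; lia || lra).
    assert (f y1 <= f x') by (apply Hmin1; lia).
    lra. }
  lra.
Qed.
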